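(* Let $\beta>0$, $\rho>0$, fix $\tau\in\mathbb R$, and let $\Pi=\Pi(\tau,r)$ and $\hat g=\hat g(\tau/\beta,r/\beta,\rho/\beta)$ be as in the context, with $\hat g_\infty=\lim_{r\to\infty}\hat g$. Consider the six terms of $$F[\hat g,\Pi]=T_1+\dots+T_6,$$ $$T_1=4\cos(2\hat g)\frac{[\partial_\tau\Pi][\partial_r\Pi]}{\Pi^2},\ T_2=-2\cos(2\hat g)\frac{\partial_\tau\partial_r\Pi}{\Pi},\ T_3=2\sin(2\hat g)\frac{[\partial_r\Pi]^2}{\Pi^2},$$ $$T_4=-2\sin(2\hat g)\frac{[\partial_\tau\Pi]^2}{\Pi^2},\ T_5=\sin(2\hat g)\frac{\partial^2_\tau\Pi}{\Pi},\ T_6=-\sin(2\hat g)\frac{\partial^2_r\Pi}{\Pi}.$$ Then for $j=1,\dots,5$ the radial integral $\int_0^\infty dr\,r^2\,T_j$ converges, while the only possibly divergent radial integral is that of $T_6$, and its divergence is logarithmic: $r^2T_6$ is integrable on $[0,\beta]$ and $r^2T_6+\frac{2\pi\rho^2}{\beta}\sin(2\hat g_\infty)\frac1r$ is integrable on $[\beta,\infty)$, so that $\int_0^R dr\,r^2T_6=-\frac{2\pi\rho^2}{\beta}\sin(2\hat g_\infty)\log R+O(1)$ as $R\to\infty$.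
   Context: $\Pi(\tau,r)=1+\frac{\pi\rho^2}{\beta r}\frac{\sinh(2\pi r/\beta)}{\cosh(2\pi r/\beta)-\cos(2\pi\tau/\beta)}$. With $\hat\tau=\tau/\beta$, $\hat r=r/\beta$, $\hat\rho=\rho/\beta$, $\hat g(\hat\tau,\hat r,\hat\rho)=-\pi^2\hat\rho^2\sin(2\pi\hat\tau)\int_0^1\frac{ds}{s}\frac{\sinh(2\pi\hat rs)}{[\cosh(2\pi\hat rs)-\cos(2\pi\hat\tau)][\cosh(2\pi\hat rs)-\cos(2\pi\hat\tau)+\frac{\pi\hat\rho^2}{\hat rs}\sinh(2\pi\hat rs)]}$ (equivalently $\hat g=\int_0^1ds\,\frac r2\partial_\tau\log\Pi(\tau,sr)$); for fixed $\hat\tau,\hat\rho$ this has a finite limit $\hat g_\infty$ as $\hat r\to\infty$. In $T_j$, all quantities are evaluated at $(\tau,r)$, with $\hat g$ at $(\hat\tau,\hat r,\hat\rho)$; $\partial_\tau,\partial_r$ are partial derivatives of $\Pi(\tau,r)$. *)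

From Stdlib Require Import Reals.
From Coquelicot Require Export Coquelicot.
Open Scope R_scope.

Definition Pi (beta rho tau r : R) : R :=
  1 + PI * rho ^ 2 / (beta * r) *
      (sinh (2 * PI * r / beta) / (cosh (2 * PI * r / beta) - cos (2 * PI * tau / beta))).

Definition ghat_integrand (th rh ph s : R) : R :=
  / s * sinh (2 * PI * rh * s) /
  ((cosh (2 * PI * rh * s) - cos (2 * PI * th)) *
   (cosh (2 * PI * rh * s) - cos (2 * PI * th)
    + PI * ph ^ 2 / (rh * s) * sinh (2 * PI * rh * s))).

Definition ghat (th rh ph : R) : R :=
  - PI ^ 2 * ph ^ 2 * sin (2 * PI * th) * RInt (ghat_integrand th rh ph) 0 1.

Definition gb (beta rho tau r : R) : R := ghat (tau / beta) (r / beta) (rho / beta).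

Definition dtPi beta rho tau r := Derive (fun t => Pi beta rho t r) tau.
Definition drPi beta rho tau r := Derive (fun x => Pi beta rho tau x) r.
Definition dtrPi beta rho tau r :=
  Derive (fun t => Derive (fun x => Pi beta rho t x) r) tau.
Definition dttPi beta rho tau r :=
  Derive (fun t => Derive (fun t' => Pi beta rho t' r) t) tau.
Definition drrPi beta rho tau r :=
  Derive (fun x => Derive (fun x' => Pi beta rho tau x') x) r.

Definition T1 beta rho tau r :=
  4 * cos (2 * gb beta rho tau r) * (dtPi beta rho tau r * drPi beta rho tau r)
    / (Pi beta rho tau r) ^ 2.
Definition T2 beta rho tau r :=
  - 2 * cos (2 * gb beta rho tau r) * dtrPi beta rho tau r / Pi beta rho tau r.
Definition T3 beta rho tau r :=
  2 * sin (2 * gb beta rho tau r) * (drPi beta rho tau r) ^ 2 / (Pi beta rho tau r) ^ 2.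
Definition T4 beta rho tau r :=
  - 2 * sin (2 * gb beta rho tau r) * (dtPi beta rho tau r) ^ 2 / (Pi beta rho tau r) ^ 2.
Definition T5 beta rho tau r :=
  sin (2 * gb beta rho tau r) * dttPi beta rho tau r / Pi beta rho tau r.
Definition T6 beta rho tau r :=
  - sin (2 * gb beta rho tau r) * drrPi beta rho tau r / Pi beta rho tau r.

From Stdlib Require Import Reals Lra Psatz.
From Coquelicot Require Import Coquelicot.
Open Scope R_scope.

(* With S = sinh (2 pi r / beta), C = cosh (2 pi r / beta) and u = cos (2 pi tau / beta),
   every derivative of Pi is a rational expression in S, C, D = C - u, r and the tau-derivatives
   of u.  If sin (2 pi tau / beta) = 0, then ghat and the tau-derivatives of Pi vanish and all
   six integrands are zero.  Otherwise u < 1, so D >= 1 - u and Pi >= 1: near r = 0 the factor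
   r^2 absorbs the 1/r and 1/r^2 singularities of the derivatives and every r^2 T_j is bounded,
   while for large r, D >= C/2 grows exponentially, so every term decays faster than any power of
   r except the term 2 S / (r^3 D) of the second r-derivative; it makes
   r^2 T_6 = -(2 pi rho^2 / beta) sin (2 ghat) / r + O(1/r^2).  Finally ghat(r) - ghat_oo = O(1/r),
   because after rescaling ghat is a multiple of the integral up to r/beta of a kernel that is
   O(1/v^2), and sin is 1-Lipschitz. *)

Lemma continuous_Rplus (f g : R -> R) x :
  continuous f x -> continuous g x -> continuous (fun y => f y + g y) x.
Proof. apply (@continuous_plus R_UniformSpace R_AbsRing R_NormedModule). Qed.

Lemma continuous_Rmult (f g : R -> R) x :
  continuous f x -> continuous g x -> continuous (fun y => f y * g y) x.
Proof. apply (@continuous_mult R_UniformSpace R_AbsRing). Qed.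

Lemma continuous_Rcomp (f g : R -> R) x :
  continuous f x -> continuous g (f x) -> continuous (fun y => g (f y)) x.
Proof. apply (@continuous_comp R_UniformSpace R_UniformSpace R_UniformSpace). Qed.

Lemma continuous_Rconst (c x : R) : continuous (fun _ : R => c) x.
Proof. apply (@continuous_const R_UniformSpace R_UniformSpace). Qed.

Lemma continuous_Rid x : continuous (fun y : R => y) x.
Proof. apply (@continuous_id R_UniformSpace). Qed.

Lemma continuous_of_ex_derive (f : R -> R) x : ex_derive f x -> continuous f x.
Proof. apply (@ex_derive_continuous R_AbsRing R_NormedModule). Qed.

Lemma continuous_Ropp (f : R -> R) x : continuous f x -> continuous (fun y => - f y) x.
Proof.
intros Hf. apply (continuous_Rcomp f Ropp); auto.
apply continuous_of_ex_derive. auto_derive. auto.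
Qed.

Lemma continuous_Rinv (f : R -> R) x :
  continuous f x -> f x <> 0 -> continuous (fun y => / f y) x.
Proof.
intros Hf Hnz. apply (continuous_Rcomp f Rinv); auto.
apply continuous_of_ex_derive. auto_derive. auto.
Qed.

Lemma continuous_Rpow (f : R -> R) n x : continuous f x -> continuous (fun y => f y ^ n) x.
Proof.
intros Hf. induction n as [|n IH]; simpl.
- apply continuous_Rconst.
- apply continuous_Rmult; auto.
Qed.

Lemma continuous_ext_ball (f g : R -> R) x d : 0 < d ->
  (forall y, Rabs (y - x) < d -> f y = g y) -> continuous f x -> continuous g x.
Proof.
intros Hd Hfg. apply continuous_ext_loc.
exists (mkposreal d Hd). intros y Hy. apply Hfg, Hy.
Qed.

Definition continuous_on_pos (f : R -> R) := forall x, 0 < x -> continuous f x.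

Lemma continuous_on_pos_ext (f g : R -> R) :
  (forall x, 0 < x -> f x = g x) -> continuous_on_pos f -> continuous_on_pos g.
Proof.
intros Hfg Hf x Hx. apply (continuous_ext_ball f g x x Hx); auto.
intros y Hy. apply Hfg. apply Rabs_def2 in Hy. lra.
Qed.

(** * Improper integrals on (0, +oo) *)

Lemma ex_RInt_continuous_R (f : R -> R) a b :
  (forall z, Rmin a b <= z <= Rmax a b -> continuous f z) -> ex_RInt f a b.
Proof. apply (@ex_RInt_continuous R_CompleteNormedModule). Qed.

Lemma ex_RInt_on_pos (f : R -> R) a b :
  continuous_on_pos f -> 0 < a -> 0 < b -> ex_RInt f a b.
Proof.
intros Hf Ha Hb. apply ex_RInt_continuous_R. intros z Hz. apply Hf.
assert (0 < Rmin a b) by (apply Rmin_case; lra). lra.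
Qed.

Lemma RInt_Chasles_R (f : R -> R) a b c :
  ex_RInt f a b -> ex_RInt f b c -> RInt f a b + RInt f b c = RInt f a c.
Proof. apply (@RInt_Chasles R_CompleteNormedModule). Qed.

Lemma abs_RInt_le_const_unordered (f : R -> R) a b M : ex_RInt f a b ->
  (forall t, Rmin a b <= t <= Rmax a b -> Rabs (f t) <= M) ->
  Rabs (RInt f a b) <= Rabs (b - a) * M.
Proof.
intros Hf Hb. destruct (Rle_dec a b) as [Hab|Hab].
- rewrite (Rabs_right (b - a)) by lra. apply abs_RInt_le_const; auto.
  intros t Ht. apply Hb. rewrite Rmin_left, Rmax_right; lra.
- rewrite <- (opp_RInt_swap f b a) by (apply ex_RInt_swap; auto).
  change (Rabs (- RInt f b a) <= Rabs (b - a) * M).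
  rewrite Rabs_Ropp, (Rabs_left (b - a)), Ropp_minus_distr by lra.
  apply abs_RInt_le_const; [lra | apply ex_RInt_swap; auto |].
  intros t Ht. apply Hb. rewrite Rmin_right, Rmax_left; lra.
Qed.

Lemma is_RInt_inv_sq M x x' : 0 < x <= x' -> is_RInt (fun t => M / t ^ 2) x x' (M / x - M / x').
Proof.
intros Hx.
replace (M / x - M / x') with (minus ((fun t => - M / t) x') ((fun t => - M / t) x))
  by (unfold minus, plus, opp; simpl; field; lra).
apply (@is_RInt_derive R_CompleteNormedModule (fun t => - M / t)); intros t Ht;
  rewrite Rmin_left, Rmax_right in Ht by lra.
- auto_derive; [lra | field; lra].
- apply continuous_of_ex_derive. auto_derive. nra.
Qed.

Lemma abs_RInt_le_inv_sq (f : R -> R) M x x' : 0 < x <= x' -> ex_RInt f x x' ->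
  (forall t, x <= t <= x' -> Rabs (f t) <= M / t ^ 2) ->
  Rabs (RInt f x x') <= M / x.
Proof.
intros Hx Hf Hb.
assert (HM : 0 <= M).
{ assert (0 < x ^ 2) by (apply pow_lt; lra).
  assert (0 <= M / x ^ 2) by (eapply Rle_trans; [apply Rabs_pos | apply Hb; lra]).
  apply Rmult_le_reg_r with (/ x ^ 2); [apply Rinv_0_lt_compat; auto | lra]. }
assert (Hg := is_RInt_inv_sq M x x' Hx).
assert (Hg' : ex_RInt (fun t => M / t ^ 2) x x') by (eexists; eauto).
apply (is_RInt_unique (V := R_CompleteNormedModule)) in Hg.
assert (Hup : RInt f x x' <= RInt (fun t => M / t ^ 2) x x').
{ apply RInt_le; try lra; auto.
  intros t Ht. specialize (Hb t ltac:(lra)). apply Rabs_le_between in Hb. lra. }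
assert (Hlo : RInt (fun t => - (M / t ^ 2)) x x' <= RInt f x x').
{ apply RInt_le; try lra; auto; [apply (ex_RInt_opp (V := R_NormedModule)); auto |].
  intros t Ht. specialize (Hb t ltac:(lra)). apply Rabs_le_between in Hb. lra. }
rewrite (RInt_opp (V := R_CompleteNormedModule)) in Hlo by auto.
change (- RInt (fun t => M / t ^ 2) x x' <= RInt f x x') in Hlo.
assert (0 <= M / x') by (apply Rdiv_le_0_compat; lra).
apply Rabs_le. lra.
Qed.

Lemma ex_RInt_gen_of_cauchy {F G : (R -> Prop) -> Prop}
  {FF : ProperFilter F} {FG : ProperFilter G} (f : R -> R) (P Q : R -> Prop) :
  F P -> G Q -> (forall a b, P a -> Q b -> ex_RInt f a b) ->
  (forall eps : posreal, exists P' Q', F P' /\ G Q' /\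
     forall a a' b b', P' a -> P' a' -> Q' b -> Q' b' ->
       Rabs (RInt f a' b' - RInt f a b) < eps) ->
  ex_RInt_gen f F G.
Proof.
intros HP HQ Hex Hcauchy.
apply (filterlimi_locally_cauchy (F := filter_prod F G)
  (fun ab y => is_RInt f (fst ab) (snd ab) y)).
- apply Filter_prod with P Q; auto. intros a b Ha Hb. split.
  + exists (RInt f a b). apply (RInt_correct (V := R_CompleteNormedModule)). auto.
  + intros y1 y2 H1 H2. apply (is_RInt_unique (V := R_CompleteNormedModule)) in H1, H2.
    congruence.
- intros eps. destruct (Hcauchy eps) as (P' & Q' & HP' & HQ' & H).
  exists (fun ab => P' (fst ab) /\ Q' (snd ab)). split.
  + apply Filter_prod with P' Q'; auto.
  + intros [a b] [a' b'] [Ha Hb] [Ha' Hb'] u v Hu Hv.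
    apply (is_RInt_unique (V := R_CompleteNormedModule)) in Hu, Hv. subst u v.
    apply H; auto.
Qed.

Definition bounded_near_0 (f : R -> R) := exists M, forall x, 0 < x <= 1 -> Rabs (f x) <= M.

Definition bigO_inv_pow (n : nat) (f : R -> R) :=
  exists M X, 1 <= X /\ forall x, X <= x -> Rabs (f x) <= M / x ^ n.

Definition admissible (f : R -> R) :=
  continuous_on_pos f /\ bounded_near_0 f /\ bigO_inv_pow 2 f.

Lemma at_right_0_interval d : 0 < d -> at_right 0 (fun a => 0 < a < d).
Proof.
intros Hd. exists (mkposreal d Hd). intros y Hy Hy0.
change (Rabs (y + - 0) < d) in Hy. apply Rabs_def2 in Hy. simpl in Hy0. lra.
Qed.

Lemma ex_RInt_gen_at_right_0 (f : R -> R) b : 0 < b ->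
  continuous_on_pos f -> bounded_near_0 f -> ex_RInt_gen f (at_right 0) (at_point b).
Proof.
intros Hb Hf [M HM].
assert (HM0 : 0 <= M) by (eapply Rle_trans; [apply Rabs_pos | apply (HM 1); lra]).
apply (ex_RInt_gen_of_cauchy f (fun a => 0 < a < b) (fun y => y = b)).
- apply at_right_0_interval; auto.
- reflexivity.
- intros a y Ha ->. apply ex_RInt_on_pos; auto; lra.
- intros eps. assert (Heps := cond_pos eps).
  set (eta := Rmin (Rmin 1 b) (eps / (M + 1))).
  assert (Heta : 0 < eta) by (repeat apply Rmin_case; try apply Rdiv_lt_0_compat; lra).
  assert (Hetab : eta <= 1 /\ eta <= b).
  { assert (eta <= Rmin 1 b) by apply Rmin_l.
    assert (Rmin 1 b <= 1 /\ Rmin 1 b <= b) by (split; [apply Rmin_l | apply Rmin_r]). lra. }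
  assert (HetaM : eta * M < eps).
  { assert (eta <= eps / (M + 1)) by apply Rmin_r.
    assert (eps / (M + 1) * (M + 1) = eps) by (field; lra). nra. }
  exists (fun a => 0 < a < eta), (fun y => y = b). repeat split.
  + apply at_right_0_interval; auto.
  + intros a a' y y' Ha Ha' -> ->.
    assert (E : RInt f a' a + RInt f a b = RInt f a' b)
      by (apply RInt_Chasles_R; apply ex_RInt_on_pos; auto; lra).
    replace (RInt f a' b - RInt f a b) with (RInt f a' a) by lra.
    eapply Rle_lt_trans.
    * apply abs_RInt_le_const_unordered; [apply ex_RInt_on_pos; auto; lra |].
      intros t Ht. apply HM.
      assert (0 < Rmin a' a) by (apply Rmin_case; lra).
      assert (Rmax a' a <= eta) by (apply Rmax_case; lra). lra.
    * assert (Rabs (a - a') <= eta) by (apply Rabs_le; lra). nra.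
Qed.

Lemma bigO_inv_pow_coef_nonneg n (f : R -> R) M X : 1 <= X ->
  (forall x, X <= x -> Rabs (f x) <= M / x ^ n) -> 0 <= M.
Proof.
intros HX H. specialize (H X (Rle_refl _)).
assert (0 < X ^ n) by (apply pow_lt; lra).
assert (0 <= M / X ^ n) by (eapply Rle_trans; [apply Rabs_pos | eauto]).
apply Rmult_le_reg_r with (/ X ^ n); [apply Rinv_0_lt_compat; auto | lra].
Qed.

Lemma ex_RInt_gen_p_infty (f : R -> R) b : 0 < b ->
  continuous_on_pos f -> bigO_inv_pow 2 f -> ex_RInt_gen f (at_point b) (Rbar_locally p_infty).
Proof.
intros Hb Hf (M & X & HX & HM).
assert (HM0 := bigO_inv_pow_coef_nonneg 2 f M X HX HM).
apply (ex_RInt_gen_of_cauchy f (fun y => y = b) (fun y => b <= y)).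
- reflexivity.
- exists b. intros; lra.
- intros a y -> Hy. apply ex_RInt_on_pos; auto; lra.
- intros eps. assert (Heps := cond_pos eps).
  set (Y := Rmax (Rmax X b) (2 * (M + 1) / eps)).
  assert (HXY : X <= Y) by (eapply Rle_trans; [apply Rmax_l | apply Rmax_l]).
  assert (HbY : b <= Y) by (eapply Rle_trans; [apply Rmax_r | apply Rmax_l]).
  assert (HMY : M / Y < eps).
  { assert (2 * (M + 1) / eps <= Y) by apply Rmax_r.
    apply Rmult_lt_reg_r with Y; [lra|].
    replace (M / Y * Y) with M by (field; lra).
    apply Rlt_le_trans with (eps * (2 * (M + 1) / eps)); [|apply Rmult_le_compat_l; lra].
    replace (eps * (2 * (M + 1) / eps)) with (2 * (M + 1)) by (field; lra). lra. }
  assert (Htail : forall y y', Y <= y <= y' -> Rabs (RInt f y y') < eps).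
  { intros y y' Hy. eapply Rle_lt_trans; [|apply HMY].
    eapply Rle_trans.
    - apply abs_RInt_le_inv_sq; [lra | apply ex_RInt_on_pos; auto; lra |].
      intros t Ht. apply HM. lra.
    - unfold Rdiv. apply Rmult_le_compat_l; [lra|]. apply Rinv_le_contravar; lra. }
  exists (fun y => y = b), (fun y => Y <= y). repeat split.
  + exists Y. intros; lra.
  + intros a a' y y' -> -> Hy Hy'.
    assert (E : RInt f b y + RInt f y y' = RInt f b y')
      by (apply RInt_Chasles_R; apply ex_RInt_on_pos; auto; lra).
    replace (RInt f b y' - RInt f b y) with (RInt f y y') by lra.
    destruct (Rle_dec y y') as [Hyy|Hyy].
    * apply Htail. lra.
    * rewrite <- (opp_RInt_swap f y' y) by (apply ex_RInt_on_pos; auto; lra).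
      change (Rabs (- RInt f y' y) < eps). rewrite Rabs_Ropp. apply Htail. lra.
Qed.

Lemma admissible_of_vanishing (f : R -> R) : (forall x, 0 < x -> f x = 0) -> admissible f.
Proof.
intros Hf. repeat split.
- apply (continuous_on_pos_ext (fun _ => 0)); [intros; symmetry; auto|].
  intros x _. apply continuous_Rconst.
- exists 0. intros x Hx. rewrite Hf, Rabs_R0 by lra. lra.
- exists 0, 1. split; [lra|]. intros x Hx. rewrite Hf, Rabs_R0 by lra. unfold Rdiv. lra.
Qed.

Lemma ex_RInt_gen_0_p_infty (f : R -> R) :
  admissible f -> ex_RInt_gen f (at_right 0) (Rbar_locally p_infty).
Proof.
intros (Hf & H0 & Hinf).
apply (ex_RInt_gen_Chasles f 1).
- apply ex_RInt_gen_at_right_0; auto; lra.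
- apply ex_RInt_gen_p_infty; auto; lra.
Qed.

Lemma RInt_gen_log_asymptotics (f : R -> R) c :
  continuous_on_pos f -> bounded_near_0 f -> bigO_inv_pow 2 (fun r => f r + c * / r) ->
  exists R0 C, forall Rr, R0 <= Rr -> exists v,
    is_RInt_gen f (at_right 0) (at_point Rr) v /\ Rabs (v - (- c * ln Rr)) <= C.
Proof.
intros Hf H0 (M & X & HX & HM).
set (g := fun r => f r + c * / r) in HM.
assert (Hg : continuous_on_pos g).
{ intros x Hx. apply continuous_Rplus; auto.
  apply continuous_of_ex_derive. auto_derive. lra. }
destruct (ex_RInt_gen_at_right_0 f 1 Rlt_0_1 Hf H0) as [L0 HL0].
exists X, (Rabs L0 + Rabs (RInt g 1 X) + M / X).
intros Rr HR. exists (L0 + RInt f 1 Rr). split.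
- apply (is_RInt_gen_Chasles f 1 L0 (RInt f 1 Rr)); auto.
  apply is_RInt_gen_at_point. apply (RInt_correct (V := R_CompleteNormedModule)).
  apply ex_RInt_on_pos; auto; lra.
- assert (Hln : is_RInt (fun r => c * / r) 1 Rr (c * ln Rr)).
  { replace (c * ln Rr) with (minus ((fun r => c * ln r) Rr) ((fun r => c * ln r) 1))
      by (rewrite ln_1; unfold minus, plus, opp; simpl; ring).
    apply (@is_RInt_derive R_CompleteNormedModule (fun r => c * ln r)); intros t Ht;
      rewrite Rmin_left, Rmax_right in Ht by lra.
    - auto_derive; [lra | field; lra].
    - apply continuous_of_ex_derive. auto_derive. lra. }
  assert (E1 : RInt g 1 Rr = RInt f 1 Rr + c * ln Rr).
  { unfold g. rewrite (RInt_plus (V := R_CompleteNormedModule)).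
    - rewrite (is_RInt_unique _ _ _ _ Hln). reflexivity.
    - apply ex_RInt_on_pos; auto; lra.
    - eexists; eauto. }
  assert (E2 : RInt g 1 X + RInt g X Rr = RInt g 1 Rr)
    by (apply RInt_Chasles_R; apply ex_RInt_on_pos; auto; lra).
  assert (B : Rabs (RInt g X Rr) <= M / X).
  { apply abs_RInt_le_inv_sq; [lra | apply ex_RInt_on_pos; auto; lra |].
    intros t Ht. apply HM. lra. }
  replace (L0 + RInt f 1 Rr - - c * ln Rr) with (L0 + RInt g 1 X + RInt g X Rr) by lra.
  assert (Htri1 := Rabs_triang (L0 + RInt g 1 X) (RInt g X Rr)).
  assert (Htri2 := Rabs_triang L0 (RInt g 1 X)). lra.
Qed.

Lemma bounded_near_0_ext (f g : R -> R) :
  bounded_near_0 f -> (forall x, 0 < x -> f x = g x) -> bounded_near_0 g.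
Proof. intros [M H] E. exists M. intros x Hx. rewrite <- E by lra. auto. Qed.

Lemma bounded_near_0_plus (f g : R -> R) :
  bounded_near_0 f -> bounded_near_0 g -> bounded_near_0 (fun x => f x + g x).
Proof.
intros [M1 H1] [M2 H2]. exists (M1 + M2). intros x Hx.
specialize (H1 x Hx). specialize (H2 x Hx).
eapply Rle_trans; [apply Rabs_triang | lra].
Qed.

Lemma bounded_near_0_opp (f : R -> R) : bounded_near_0 f -> bounded_near_0 (fun x => - f x).
Proof. intros [M H]. exists M. intros x Hx. rewrite Rabs_Ropp. auto. Qed.

Lemma bounded_near_0_minus (f g : R -> R) :
  bounded_near_0 f -> bounded_near_0 g -> bounded_near_0 (fun x => f x - g x).
Proof. intros. apply bounded_near_0_plus; [|apply bounded_near_0_opp]; auto. Qed.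

Lemma bounded_near_0_mult (f g : R -> R) :
  bounded_near_0 f -> bounded_near_0 g -> bounded_near_0 (fun x => f x * g x).
Proof.
intros [M1 H1] [M2 H2]. exists (M1 * M2). intros x Hx. rewrite Rabs_mult.
apply Rmult_le_compat; auto; apply Rabs_pos.
Qed.

Lemma bounded_near_0_const c : bounded_near_0 (fun _ => c).
Proof. exists (Rabs c). intros. lra. Qed.

Lemma bounded_near_0_pow (f : R -> R) n : bounded_near_0 f -> bounded_near_0 (fun x => f x ^ n).
Proof.
intros Hf. induction n as [|n IH]; simpl.
- apply bounded_near_0_const.
- apply bounded_near_0_mult; auto.
Qed.

Lemma bounded_near_0_id : bounded_near_0 (fun x => x).
Proof. exists 1. intros x Hx. rewrite Rabs_right; lra. Qed.

Lemma bounded_near_0_sin (g : R -> R) : bounded_near_0 (fun x => sin (g x)).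
Proof. exists 1. intros. apply Rabs_le, SIN_bound. Qed.

Lemma bounded_near_0_cos (g : R -> R) : bounded_near_0 (fun x => cos (g x)).
Proof. exists 1. intros. apply Rabs_le, COS_bound. Qed.

Lemma bigO_inv_pow_of_bound (f : R -> R) K X :
  (forall x, X <= x -> Rabs (f x) <= K) -> bigO_inv_pow 0 f.
Proof.
intros H. exists K, (Rmax X 1). split; [apply Rmax_r|].
intros x Hx. simpl. rewrite Rdiv_1_r. apply H. eapply Rle_trans; [apply Rmax_l | eauto].
Qed.

Lemma bigO_inv_pow_ext n (f g : R -> R) :
  bigO_inv_pow n f -> (forall x, 1 <= x -> f x = g x) -> bigO_inv_pow n g.
Proof.
intros (M & X & HX & H) E. exists M, X. split; auto.
intros x Hx. rewrite <- E by lra. auto.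
Qed.

Lemma bigO_inv_pow_plus n (f g : R -> R) :
  bigO_inv_pow n f -> bigO_inv_pow n g -> bigO_inv_pow n (fun x => f x + g x).
Proof.
intros (M1 & X1 & H1 & B1) (M2 & X2 & H2 & B2). exists (M1 + M2), (Rmax X1 X2).
split; [eapply Rle_trans; [apply H1 | apply Rmax_l]|].
intros x Hx. specialize (B1 x (Rle_trans _ _ _ (Rmax_l X1 X2) Hx)).
specialize (B2 x (Rle_trans _ _ _ (Rmax_r X1 X2) Hx)).
eapply Rle_trans; [apply Rabs_triang|]. unfold Rdiv in *. lra.
Qed.

Lemma bigO_inv_pow_opp n (f : R -> R) : bigO_inv_pow n f -> bigO_inv_pow n (fun x => - f x).
Proof.
intros (M & X & HX & H). exists M, X. split; auto.
intros x Hx. rewrite Rabs_Ropp. auto.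
Qed.

Lemma bigO_inv_pow_minus n (f g : R -> R) :
  bigO_inv_pow n f -> bigO_inv_pow n g -> bigO_inv_pow n (fun x => f x - g x).
Proof. intros. apply bigO_inv_pow_plus; [|apply bigO_inv_pow_opp]; auto. Qed.

Lemma bigO_inv_pow_mult n m (f g : R -> R) :
  bigO_inv_pow n f -> bigO_inv_pow m g -> bigO_inv_pow (n + m) (fun x => f x * g x).
Proof.
intros (M1 & X1 & H1 & B1) (M2 & X2 & H2 & B2). exists (M1 * M2), (Rmax X1 X2).
split; [eapply Rle_trans; [apply H1 | apply Rmax_l]|].
intros x Hx. assert (HX1 : X1 <= x) by (eapply Rle_trans; [apply Rmax_l | eauto]).
assert (HX2 : X2 <= x) by (eapply Rle_trans; [apply Rmax_r | eauto]).
rewrite Rabs_mult, pow_add.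
replace (M1 * M2 / (x ^ n * x ^ m)) with ((M1 / x ^ n) * (M2 / x ^ m))
  by (field; split; apply pow_nonzero; lra).
apply Rmult_le_compat; auto; apply Rabs_pos.
Qed.

Lemma bigO_inv_pow_mult_l n (f g : R -> R) :
  bigO_inv_pow n f -> bigO_inv_pow 0 g -> bigO_inv_pow n (fun x => f x * g x).
Proof. intros. rewrite <- (Nat.add_0_r n). apply bigO_inv_pow_mult; auto. Qed.

Lemma bigO_inv_pow_mult_r n (f g : R -> R) :
  bigO_inv_pow 0 f -> bigO_inv_pow n g -> bigO_inv_pow n (fun x => f x * g x).
Proof. intros. apply (bigO_inv_pow_mult 0 n); auto. Qed.

Lemma bigO_inv_pow_const c : bigO_inv_pow 0 (fun _ => c).
Proof. apply bigO_inv_pow_of_bound with (Rabs c) 0. intros. lra. Qed.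

Lemma bigO_inv_pow_sin (g : R -> R) : bigO_inv_pow 0 (fun x => sin (g x)).
Proof. apply bigO_inv_pow_of_bound with 1 0. intros. apply Rabs_le, SIN_bound. Qed.

Lemma bigO_inv_pow_cos (g : R -> R) : bigO_inv_pow 0 (fun x => cos (g x)).
Proof. apply bigO_inv_pow_of_bound with 1 0. intros. apply Rabs_le, COS_bound. Qed.

Lemma bigO_inv_pow_S n (f : R -> R) : bigO_inv_pow (S n) f -> bigO_inv_pow n f.
Proof.
intros (M & X & HX & H). assert (HM := bigO_inv_pow_coef_nonneg _ _ _ _ HX H).
exists M, X. split; auto. intros x Hx. eapply Rle_trans; [apply H; auto|].
assert (0 < x ^ n) by (apply pow_lt; lra).
unfold Rdiv. apply Rmult_le_compat_l; auto. apply Rinv_le_contravar; auto.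
simpl. rewrite <- (Rmult_1_l (x ^ n)) at 1. apply Rmult_le_compat_r; lra.
Qed.

Lemma bigO_inv_pow_mult_id n (f : R -> R) :
  bigO_inv_pow (S n) f -> bigO_inv_pow n (fun x => x * f x).
Proof.
intros (M & X & HX & H). exists M, X. split; auto.
intros x Hx. rewrite Rabs_mult, (Rabs_right x) by lra.
specialize (H x Hx). simpl in H.
replace (M / x ^ n) with (x * (M / (x * x ^ n))) by (field; split; try apply pow_nonzero; lra).
apply Rmult_le_compat_l; lra.
Qed.

Lemma bigO_inv_pow_inv_pow n : bigO_inv_pow n (fun x => / x ^ n).
Proof.
exists 1, 1. split; [lra|]. intros x Hx.
rewrite Rabs_right; [unfold Rdiv; lra|].
apply Rle_ge, Rlt_le, Rinv_0_lt_compat, pow_lt. lra.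
Qed.

Lemma bigO_inv_pow_inv : bigO_inv_pow 1 (fun x => / x).
Proof.
eapply bigO_inv_pow_ext; [apply (bigO_inv_pow_inv_pow 1)|]. intros. simpl. rewrite Rmult_1_r. auto.
Qed.

Lemma exp_ge_pow n y : 0 <= y -> (y / INR (S n)) ^ S n <= exp y.
Proof.
intros Hy. assert (HN : 0 < INR (S n)) by (apply lt_0_INR; lia).
assert (Hpow : forall k z, exp (INR k * z) = exp z ^ k).
{ induction k as [|k IH]; intros z.
  - simpl. rewrite Rmult_0_l. apply exp_0.
  - rewrite S_INR, Rmult_plus_distr_r, Rmult_1_l, exp_plus, IH. simpl. ring. }
replace y with (INR (S n) * (y / INR (S n))) at 2 by (field; lra).
rewrite Hpow. apply pow_incr. split.
- apply Rdiv_le_0_compat; lra.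
- assert (H := exp_ineq1_le (y / INR (S n))). lra.
Qed.

Lemma bigO_inv_pow_of_exp_decay n (f : R -> R) k K X : 0 < k ->
  (forall x, X <= x -> Rabs (f x) <= K * / exp (k * x)) -> bigO_inv_pow n f.
Proof.
intros Hk H. set (N := INR (S n)). assert (HN : 0 < N) by (apply lt_0_INR; lia).
exists (K * (N / k) ^ S n), (Rmax X 1). split; [apply Rmax_r|].
intros x Hx. assert (HX : X <= x) by (eapply Rle_trans; [apply Rmax_l | eauto]).
assert (H1 : 1 <= x) by (eapply Rle_trans; [apply Rmax_r | eauto]).
assert (HK : 0 <= K).
{ assert (0 < / exp (k * x)) by (apply Rinv_0_lt_compat, exp_pos).
  assert (0 <= K * / exp (k * x)) by (eapply Rle_trans; [apply Rabs_pos | eauto]).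
  apply Rmult_le_reg_r with (/ exp (k * x)); auto. lra. }
eapply Rle_trans; [apply H; auto|].
assert (E := exp_ge_pow n (k * x) ltac:(nra)). fold N in E.
assert (0 < (k * x / N) ^ S n) by (apply pow_lt, Rdiv_lt_0_compat; nra).
replace (K * (N / k) ^ S n / x ^ n) with (K * ((N / k) ^ S n / x ^ n)) by (unfold Rdiv; ring).
apply Rmult_le_compat_l; auto.
eapply Rle_trans; [apply Rinv_le_contravar; eauto|].
rewrite <- pow_inv.
replace (/ (k * x / N)) with ((N / k) * / x) by (field; repeat split; lra).
rewrite Rpow_mult_distr. unfold Rdiv. apply Rmult_le_compat_l.
- apply pow_le. apply Rmult_le_pos; [lra | left; apply Rinv_0_lt_compat; auto].
- rewrite !pow_inv. apply Rinv_le_contravar; [apply pow_lt; lra|].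
  apply Rle_pow; auto.
Qed.

Lemma bigO_inv_pow_mult_sq n (f : R -> R) :
  bigO_inv_pow (S (S n)) f -> bigO_inv_pow n (fun x => x ^ 2 * f x).
Proof.
intros H. apply bigO_inv_pow_ext with (fun x => x * (x * f x)).
- do 2 apply bigO_inv_pow_mult_id. auto.
- intros. ring.
Qed.

Lemma exp_le_exp x y : x <= y -> exp x <= exp y.
Proof.
intros H. destruct (Rle_lt_or_eq_dec x y H) as [Hlt | ->]; [left; apply exp_increasing|]; lra.
Qed.

Lemma cosh_eq y : cosh y = 1 + (exp y - 1) ^ 2 / (2 * exp y).
Proof. assert (H := exp_pos y). unfold cosh. rewrite exp_Ropp. field. lra. Qed.

Lemma cosh_ge_1 y : 1 <= cosh y.
Proof.
rewrite cosh_eq. assert (H := exp_pos y).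
assert (0 <= (exp y - 1) ^ 2 / (2 * exp y)) by (apply Rdiv_le_0_compat; [apply pow2_ge_0 | lra]).
lra.
Qed.

Lemma cosh_gt_1 y : y <> 0 -> 1 < cosh y.
Proof.
intros Hy. rewrite cosh_eq. assert (H := exp_pos y).
assert (exp y <> 1) by (rewrite <- exp_0; intros E; apply exp_inv in E; auto).
assert (0 < (exp y - 1) ^ 2) by (rewrite <- Rsqr_pow2; apply Rsqr_pos_lt; lra).
assert (0 < (exp y - 1) ^ 2 / (2 * exp y)) by (apply Rdiv_lt_0_compat; lra).
lra.
Qed.

Lemma cosh_ge_affine y : 0 <= y -> (1 + y) / 2 <= cosh y.
Proof.
intros Hy. unfold cosh. assert (H := exp_ineq1_le y). assert (0 < exp (- y)) by apply exp_pos.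
lra.
Qed.

Lemma cosh_le_exp y : 0 <= y -> cosh y <= exp y.
Proof. intros Hy. unfold cosh. assert (exp (- y) <= exp y) by (apply exp_le_exp; lra). lra. Qed.

Lemma sinh_pos y : 0 < y -> 0 < sinh y.
Proof. intros Hy. rewrite <- sinh_0. apply sinh_lt. auto. Qed.

Lemma sinh_le_cosh y : sinh y <= cosh y.
Proof. unfold sinh, cosh. assert (0 < exp (- y)) by apply exp_pos. lra. Qed.

Lemma sinh_le_mul_exp y : 0 <= y -> sinh y <= y * exp y.
Proof.
intros Hy. unfold sinh.
assert (H1 := exp_ineq1_le (- y)). assert (He := exp_ineq1_le y).
assert (Hey : exp y * exp (- y) = 1) by (rewrite <- exp_plus, Rplus_opp_r; apply exp_0).
assert (exp y - 1 <= y * exp y).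
{ assert (0 <= (exp (- y) - (1 - y)) * exp y) by (apply Rmult_le_pos; [lra | left; apply exp_pos]).
  nra. }
nra.
Qed.

Lemma abs_sin_le z : Rabs (sin z) <= Rabs z.
Proof.
assert (Hpos : forall w, 0 < w -> Rabs (sin w) <= w).
{ intros w Hw. assert (H1 := sin_lt_x w Hw). apply Rabs_le. split; [|lra].
  destruct (Rle_dec 1 w); [assert (H := SIN_bound w); lra|].
  assert (0 <= sin w) by (apply sin_ge_0; [lra | assert (H := PI2_3_2); lra]). lra. }
destruct (Rtotal_order z 0) as [H|[->|H]].
- assert (Hs := Hpos (- z) ltac:(lra)). rewrite sin_neg, Rabs_Ropp in Hs.
  rewrite (Rabs_left z) by lra. lra.
- rewrite sin_0. lra.
- rewrite (Rabs_right z) by lra. apply Hpos. lra.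
Qed.

Lemma abs_sin_sub_le a b : Rabs (sin a - sin b) <= Rabs (a - b).
Proof.
rewrite form4, !Rabs_mult, (Rabs_right 2) by lra.
assert (H := abs_sin_le ((a - b) / 2)).
assert (Hc : Rabs (cos ((a + b) / 2)) <= 1) by (apply Rabs_le, COS_bound).
replace (Rabs (a - b)) with (2 * Rabs ((a - b) / 2))
  by (rewrite <- (Rabs_right 2) at 1 by lra; rewrite <- Rabs_mult; f_equal; field).
assert (0 <= Rabs (sin ((a - b) / 2))) by apply Rabs_pos.
assert (0 <= Rabs (cos ((a + b) / 2))) by apply Rabs_pos.
nra.
Qed.

(** * Derivatives of Pi *)

Section ExplicitDerivatives.

Variables beta rho : R.
Hypothesis Hbeta : 0 < beta.

Definition sh x := sinh (2 * PI * x / beta).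
Definition ch x := cosh (2 * PI * x / beta).
Definition cs t := cos (2 * PI * t / beta).
Definition cs' t := - (2 * PI / beta) * sin (2 * PI * t / beta).
Definition cs'' t := - (2 * PI / beta) ^ 2 * cos (2 * PI * t / beta).
Definition den t x := ch x - cs t.

Definition Pi_r t x := PI * rho ^ 2 / beta *
  ((2 * PI / beta) * (1 - ch x * cs t) / (x * den t x ^ 2) - sh x / (x ^ 2 * den t x)).
Definition Pi_t t x := PI * rho ^ 2 / beta * (sh x * cs' t / (x * den t x ^ 2)).
Definition Pi_tr t x := PI * rho ^ 2 / beta * cs' t *
  ((2 * PI / beta) * ch x / (x * den t x ^ 2) - sh x / (x ^ 2 * den t x ^ 2)
   - 2 * (2 * PI / beta) * sh x ^ 2 / (x * den t x ^ 3)).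
Definition Pi_tt t x :=
  PI * rho ^ 2 / beta * (sh x * (cs'' t * den t x + 2 * cs' t ^ 2) / (x * den t x ^ 3)).
Definition Pi_rr t x := PI * rho ^ 2 / beta *
  (2 * sh x / (x ^ 3 * den t x)
   + 2 * (2 * PI / beta) * (ch x * cs t - 1) / (x ^ 2 * den t x ^ 2)
   + (2 * PI / beta) ^ 2 * sh x * (cs t ^ 2 - 2 + ch x * cs t) / (x * den t x ^ 3)).

Lemma den_pos t x : 0 < x -> 0 < den t x.
Proof.
intros Hx. unfold den, ch, cs.
assert (1 < cosh (2 * PI * x / beta)).
{ apply cosh_gt_1. assert (HP := PI_RGT_0).
  assert (0 < 2 * PI * x / beta) by (apply Rdiv_lt_0_compat; nra). lra. }
assert (Hcos := COS_bound (2 * PI * t / beta)). lra.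
Qed.

Lemma Pi_eq t x : 0 < x -> Pi beta rho t x = 1 + PI * rho ^ 2 / beta * (/ x * (sh x * / den t x)).
Proof.
intros Hx. assert (HD := den_pos t x Hx). unfold Pi, sh, den, ch, cs in *. field. lra.
Qed.

Lemma Pi_ge_1 t x : 0 < x -> 1 <= Pi beta rho t x.
Proof.
intros Hx. rewrite Pi_eq by auto. assert (HD := den_pos t x Hx). assert (HP := PI_RGT_0).
assert (0 < sh x) by (apply sinh_pos, Rdiv_lt_0_compat; nra).
assert (0 <= PI * rho ^ 2 / beta) by (apply Rdiv_le_0_compat; [apply Rmult_le_pos, pow2_ge_0|]; lra).
assert (0 <= / x * (sh x * / den t x)).
{ apply Rmult_le_pos; [left; apply Rinv_0_lt_compat; auto|].
  apply Rmult_le_pos; [lra | left; apply Rinv_0_lt_compat; auto]. }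
nra.
Qed.

Ltac solve_derivative t x :=
  let HD := fresh in assert (HD := den_pos t x ltac:(assumption));
  unfold Pi_r, Pi_t, Pi_tr, Pi_tt, Pi_rr, den, sh, ch, cs, cs', cs'' in *; unfold Pi;
  unfold sinh, cosh in *; unfold Rdiv in *;
  auto_derive;
  [ repeat split; try lra; repeat (apply Rmult_integral_contrapositive_currified; try lra)
  | (* with [E = exp y], [field] needs [E^2 + 1 - 2 c E = 2 E (cosh y - c) = 2 E den t x > 0] *)
    rewrite ?exp_Ropp in *;
    let HE := fresh in assert (HE := exp_pos (2 * PI * x * / beta));
    set (E := exp (2 * PI * x * / beta)) in *;
    set (c := cos (2 * PI * t * / beta)) in *;
    assert (E * E + 1 - c * (E * 2) > 0) by
      (replace (E * E + 1 - c * (E * 2)) with ((2 * E) * ((E + / E) * / 2 - c)) by (field; lra);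
       apply Rmult_lt_0_compat; lra);
    field; repeat split; lra ].

Lemma is_derive_Pi_r t x : 0 < x -> is_derive (fun x => Pi beta rho t x) x (Pi_r t x).
Proof. intros Hx. solve_derivative t x. Qed.

Lemma is_derive_Pi_t t x : 0 < x -> is_derive (fun t => Pi beta rho t x) t (Pi_t t x).
Proof. intros Hx. solve_derivative t x. Qed.

Lemma is_derive_Pi_tr t x : 0 < x -> is_derive (fun t => Pi_r t x) t (Pi_tr t x).
Proof. intros Hx. solve_derivative t x. Qed.

Lemma is_derive_Pi_tt t x : 0 < x -> is_derive (fun t => Pi_t t x) t (Pi_tt t x).
Proof. intros Hx. solve_derivative t x. Qed.

Lemma is_derive_Pi_rr t x : 0 < x -> is_derive (fun x => Pi_r t x) x (Pi_rr t x).
Proof. intros Hx. solve_derivative t x. Qed.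

End ExplicitDerivatives.

Section PiDerive.

Variables beta rho tau : R.
Hypothesis Hbeta : 0 < beta.

Lemma drPi_eq x : 0 < x -> drPi beta rho tau x = Pi_r beta rho tau x.
Proof. intros Hx. apply is_derive_unique, is_derive_Pi_r; auto. Qed.

Lemma dtPi_eq x : 0 < x -> dtPi beta rho tau x = Pi_t beta rho tau x.
Proof. intros Hx. apply is_derive_unique, is_derive_Pi_t; auto. Qed.

Lemma dtrPi_eq x : 0 < x -> dtrPi beta rho tau x = Pi_tr beta rho tau x.
Proof.
intros Hx. unfold dtrPi.
rewrite (Derive_ext _ (fun t => Pi_r beta rho t x)).
- apply is_derive_unique, is_derive_Pi_tr; auto.
- intros t. apply is_derive_unique, is_derive_Pi_r; auto.
Qed.

Lemma dttPi_eq x : 0 < x -> dttPi beta rho tau x = Pi_tt beta rho tau x.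
Proof.
intros Hx. unfold dttPi.
rewrite (Derive_ext _ (fun t => Pi_t beta rho t x)).
- apply is_derive_unique, is_derive_Pi_tt; auto.
- intros t. apply is_derive_unique, is_derive_Pi_t; auto.
Qed.

Lemma drrPi_eq x : 0 < x -> drrPi beta rho tau x = Pi_rr beta rho tau x.
Proof.
intros Hx. unfold drrPi.
rewrite (Derive_ext_loc _ (fun y => Pi_r beta rho tau y)).
- apply is_derive_unique, is_derive_Pi_rr; auto.
- exists (mkposreal x Hx). intros y Hy. change (Rabs (y - x) < x) in Hy.
  apply Rabs_def2 in Hy. apply is_derive_unique, is_derive_Pi_r; auto. lra.
Qed.

Ltac continuity_of_formula :=
  let x := fresh "x" in let Hx := fresh "Hx" in
  intros x Hx; assert (HD := den_pos beta Hbeta tau x Hx);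
  apply continuous_of_ex_derive;
  unfold Pi_r, Pi_t, Pi_tr, Pi_tt, Pi_rr, den, sh, ch, cs, cs', cs'' in *;
  unfold sinh, cosh in *; unfold Rdiv in *; auto_derive;
  repeat split; try lra; repeat (apply Rmult_integral_contrapositive_currified; try lra).

Lemma continuous_on_pos_Pi : continuous_on_pos (Pi beta rho tau).
Proof. intros x Hx. apply continuous_of_ex_derive. eexists. apply is_derive_Pi_r; auto. Qed.

Lemma continuous_on_pos_drPi : continuous_on_pos (drPi beta rho tau).
Proof.
apply (continuous_on_pos_ext (Pi_r beta rho tau)).
- intros x Hx. symmetry. apply drPi_eq; auto.
- continuity_of_formula.
Qed.

Lemma continuous_on_pos_dtPi : continuous_on_pos (dtPi beta rho tau).
Proof.
apply (continuous_on_pos_ext (Pi_t beta rho tau)).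
- intros x Hx. symmetry. apply dtPi_eq; auto.
- continuity_of_formula.
Qed.

Lemma continuous_on_pos_dtrPi : continuous_on_pos (dtrPi beta rho tau).
Proof.
apply (continuous_on_pos_ext (Pi_tr beta rho tau)).
- intros x Hx. symmetry. apply dtrPi_eq; auto.
- continuity_of_formula.
Qed.

Lemma continuous_on_pos_dttPi : continuous_on_pos (dttPi beta rho tau).
Proof.
apply (continuous_on_pos_ext (Pi_tt beta rho tau)).
- intros x Hx. symmetry. apply dttPi_eq; auto.
- continuity_of_formula.
Qed.

Lemma continuous_on_pos_drrPi : continuous_on_pos (drrPi beta rho tau).
Proof.
apply (continuous_on_pos_ext (Pi_rr beta rho tau)).
- intros x Hx. symmetry. apply drrPi_eq; auto.
- continuity_of_formula.
Qed.

End PiDerive.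

(** * The function ghat *)

Definition sinhc y := if Req_dec_T y 0 then 1 else sinh y / y.

Lemma sinhc_neq0 y : y <> 0 -> sinhc y = sinh y / y.
Proof. intros H. unfold sinhc. destruct (Req_dec_T y 0); tauto. Qed.

Lemma sinhc_pos y : 0 < sinhc y.
Proof.
unfold sinhc. destruct (Req_dec_T y 0) as [_|Hy]; [lra|].
destruct (Rlt_dec 0 y) as [Hpos|Hneg].
- apply Rdiv_lt_0_compat; auto. apply sinh_pos; auto.
- assert (sinh y < 0) by (rewrite <- sinh_0; apply sinh_lt; lra).
  replace (sinh y / y) with (- sinh y / - y) by (field; auto).
  apply Rdiv_lt_0_compat; lra.
Qed.

Lemma sinhc_continuous y : continuous sinhc y.
Proof.
destruct (Req_dec_T y 0) as [->|Hy].
- apply continuity_pt_filterlim. intros eps Heps.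
  destruct (derivable_pt_lim_sinh 0 eps Heps) as [delta Hdelta].
  exists delta. split; [apply cond_pos|]. intros h [[_ Hh] Hhd].
  simpl in *. unfold R_dist in *. rewrite Rminus_0_r in Hhd.
  specialize (Hdelta h (not_eq_sym Hh) Hhd).
  rewrite Rplus_0_l, sinh_0, cosh_0, Rminus_0_r in Hdelta.
  unfold sinhc. destruct (Req_dec_T h 0); [congruence|].
  destruct (Req_dec_T 0 0); [auto | congruence].
- apply (continuous_ext_ball (fun z => sinh z / z) sinhc y (Rabs y)).
  + apply Rabs_pos_lt; auto.
  + intros z Hz. rewrite sinhc_neq0; auto.
    intros ->. rewrite Rminus_0_l, Rabs_Ropp in Hz. lra.
  + apply continuous_of_ex_derive. unfold sinh. auto_derive. auto.
Qed.

(* The integrand of [ghat th rh ph] after the substitution v = rh s (see [ghat_eq]). *)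
Definition ghat_kernel c ph v :=
  2 * PI * sinhc (2 * PI * v) /
  ((cosh (2 * PI * v) - c) * (cosh (2 * PI * v) - c + PI * ph ^ 2 * (2 * PI * sinhc (2 * PI * v)))).

Definition ghat_primitive c ph v := RInt (ghat_kernel c ph) 0 v.

Section GhatKernel.

Variables c ph : R.
Hypothesis Hc : c < 1.

Lemma ghat_kernel_den_pos v :
  0 < cosh (2 * PI * v) - c /\
  0 < cosh (2 * PI * v) - c + PI * ph ^ 2 * (2 * PI * sinhc (2 * PI * v)).
Proof.
assert (H1 := cosh_ge_1 (2 * PI * v)). assert (H2 := sinhc_pos (2 * PI * v)).
assert (HP := PI_RGT_0).
assert (Hph := pow2_ge_0 ph).
assert (0 <= PI * ph ^ 2 * (2 * PI * sinhc (2 * PI * v))) by (apply Rmult_le_pos; apply Rmult_le_pos; lra).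
split; lra.
Qed.

Lemma ghat_kernel_continuous v : continuous (ghat_kernel c ph) v.
Proof.
destruct (ghat_kernel_den_pos v) as [H1 H2].
assert (Hsc : continuous (fun y => 2 * PI * sinhc (2 * PI * y)) v).
{ apply continuous_Rmult; [apply continuous_Rconst|].
  apply (continuous_Rcomp (fun y => 2 * PI * y) sinhc); [|apply sinhc_continuous].
  apply continuous_of_ex_derive. auto_derive. auto. }
assert (Hch : continuous (fun y => cosh (2 * PI * y) - c) v).
{ apply continuous_of_ex_derive. unfold cosh. auto_derive. auto. }
unfold ghat_kernel, Rdiv. apply continuous_Rmult; auto.
apply continuous_Rinv; [|apply Rmult_integral_contrapositive_currified; lra].
apply continuous_Rmult; auto.
apply continuous_Rplus; auto. apply continuous_Rmult; auto. apply continuous_Rconst.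
Qed.

Lemma ghat_kernel_bound v : 1 <= v -> Rabs (ghat_kernel c ph v) <= (4 / PI) / v ^ 2.
Proof.
intros Hv. assert (HP := PI_RGT_0). assert (H3 : 3 < PI) by (assert (H := PI2_3_2); lra).
destruct ghat_kernel_den_pos with v as [H1 H2].
unfold ghat_kernel in *. rewrite sinhc_neq0 in * by nra.
set (C := cosh (2 * PI * v)) in *. set (S := sinh (2 * PI * v)) in *.
assert (HS : 0 < S) by (apply sinh_pos; nra).
assert (HSC : S <= C) by apply sinh_le_cosh.
assert (HC1 : (1 + 2 * PI * v) / 2 <= C) by (apply cosh_ge_affine; nra).
set (a := 2 * PI * (S / (2 * PI * v))) in *.
assert (Ea : a = S / v) by (unfold a; field; lra).
set (k := PI * ph ^ 2) in *.
assert (Hk : 0 <= k) by (unfold k; assert (Hph := pow2_ge_0 ph); nra).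
assert (Ha : 0 < a) by (rewrite Ea; apply Rdiv_lt_0_compat; lra).
assert (Hau : a * v <= C) by (rewrite Ea; replace (S / v * v) with S by (field; lra); lra).
assert (HD : C / 2 <= C - c) by nra.
set (Q := (C - c) * (C - c + k * a)).
assert (HQ : C * C / 4 <= Q).
{ unfold Q. assert (C / 2 * (C / 2) <= (C - c) * (C - c)) by (apply Rmult_le_compat; lra).
  assert (0 <= (C - c) * (k * a)) by (apply Rmult_le_pos; nra). nra. }
assert (HQp : 0 < Q) by nra.
assert (Hv2 : 0 < PI * v ^ 2) by nra.
rewrite Rabs_right by (apply Rle_ge, Rlt_le, Rdiv_lt_0_compat; lra).
unfold Rdiv. apply Rmult_le_reg_r with (Q * (PI * v ^ 2)); [nra|].
replace (a * / Q * (Q * (PI * v ^ 2))) with ((a * v) * (PI * v)) by (field; lra).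
replace (4 * / PI * / v ^ 2 * (Q * (PI * v ^ 2))) with (4 * Q) by (field; lra).
assert ((a * v) * (PI * v) <= C * C) by (apply Rmult_le_compat; nra).
lra.
Qed.

Lemma is_derive_ghat_primitive v : is_derive (ghat_primitive c ph) v (ghat_kernel c ph v).
Proof.
apply (@is_derive_RInt R_CompleteNormedModule _ _ 0).
- exists (mkposreal 1 Rlt_0_1). intros y _. apply (RInt_correct (V := R_CompleteNormedModule)).
  apply ex_RInt_continuous_R. intros. apply ghat_kernel_continuous.
- apply ghat_kernel_continuous.
Qed.

Lemma ghat_primitive_increment v v' : 1 <= v <= v' ->
  Rabs (ghat_primitive c ph v' - ghat_primitive c ph v) <= (4 / PI) / v.
Proof.
intros Hv. unfold ghat_primitive.
assert (Hex : forall a b, ex_RInt (ghat_kernel c ph) a b)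
  by (intros; apply ex_RInt_continuous_R; intros; apply ghat_kernel_continuous).
assert (E := RInt_Chasles_R _ 0 v v' (Hex 0 v) (Hex v v')).
replace (RInt (ghat_kernel c ph) 0 v' - RInt (ghat_kernel c ph) 0 v)
  with (RInt (ghat_kernel c ph) v v') by lra.
apply abs_RInt_le_inv_sq; auto; [lra|].
intros t Ht. apply ghat_kernel_bound. lra.
Qed.

End GhatKernel.

Lemma ghat_integrand_eq th rh ph s : 0 < s -> 0 < rh -> cos (2 * PI * th) < 1 ->
  ghat_integrand th rh ph s = rh * ghat_kernel (cos (2 * PI * th)) ph (rh * s).
Proof.
intros Hs Hr Hc. unfold ghat_integrand, ghat_kernel.
set (c := cos (2 * PI * th)) in *.
assert (Hrs : 0 < rh * s) by nra. assert (HP := PI_RGT_0).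
destruct (ghat_kernel_den_pos c ph Hc (rh * s)) as [H1 H2].
rewrite sinhc_neq0 in * by nra.
replace (2 * PI * (rh * s)) with (2 * PI * rh * s) in * by ring.
field. repeat split; try lra.
replace ((cosh (2 * PI * rh * s) - c) * (rh * s) + PI * ph ^ 2 * sinh (2 * PI * rh * s))
  with ((rh * s) * (cosh (2 * PI * rh * s) - c
                    + PI * ph ^ 2 * (2 * PI * (sinh (2 * PI * rh * s) / (2 * PI * rh * s)))))
  by (field; lra).
apply Rgt_not_eq, Rmult_lt_0_compat; lra.
Qed.

Lemma ghat_eq th rh ph : 0 < rh -> cos (2 * PI * th) < 1 ->
  ghat th rh ph = - PI ^ 2 * ph ^ 2 * sin (2 * PI * th) * ghat_primitive (cos (2 * PI * th)) ph rh.
Proof.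
intros Hr Hc. unfold ghat, ghat_primitive. f_equal.
rewrite (RInt_ext _ (fun s => scal rh (ghat_kernel (cos (2 * PI * th)) ph (rh * s + 0)))).
- rewrite (RInt_comp_lin (V := R_CompleteNormedModule)).
  + f_equal; ring.
  + apply ex_RInt_continuous_R. intros. apply ghat_kernel_continuous; auto.
- intros s Hs. rewrite Rmin_left, Rmax_right in Hs by lra.
  rewrite Rplus_0_r. apply ghat_integrand_eq; auto. lra.
Qed.

(** * The radial integrands *)

Section Radial.

Variables beta rho tau : R.
Hypothesis Hbeta : 0 < beta.

Local Notation g := (gb beta rho tau).

Lemma Pi_pos x : 0 < x -> 0 < Pi beta rho tau x.
Proof. intros Hx. assert (H := Pi_ge_1 beta rho Hbeta tau x Hx). lra. Qed.

Lemma abs_inv_Pi_le_1 x : 0 < x -> Rabs (/ Pi beta rho tau x) <= 1.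
Proof.
intros Hx. assert (H := Pi_ge_1 beta rho Hbeta tau x Hx).
rewrite Rabs_right by (apply Rle_ge, Rlt_le, Rinv_0_lt_compat; lra).
rewrite <- Rinv_1. apply Rinv_le_contravar; lra.
Qed.

Lemma bounded_near_0_inv_Pi : bounded_near_0 (fun x => / Pi beta rho tau x).
Proof. exists 1. intros x Hx. apply abs_inv_Pi_le_1. lra. Qed.

Lemma bigO_inv_pow_inv_Pi : bigO_inv_pow 0 (fun x => / Pi beta rho tau x).
Proof. apply bigO_inv_pow_of_bound with 1 1. intros x Hx. apply abs_inv_Pi_le_1. lra. Qed.

Lemma scaled_arg_bounds x : 0 < x <= 1 -> 0 < 2 * PI * x / beta <= 2 * PI / beta.
Proof.
intros Hx. assert (HP := PI_RGT_0). split.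
- apply Rdiv_lt_0_compat; nra.
- unfold Rdiv. apply Rmult_le_compat_r; [left; apply Rinv_0_lt_compat; auto | nra].
Qed.

Lemma bounded_near_0_ch : bounded_near_0 (ch beta).
Proof.
exists (exp (2 * PI / beta)). intros x Hx. destruct (scaled_arg_bounds x Hx) as [H0 H1].
unfold ch. assert (H := cosh_ge_1 (2 * PI * x / beta)).
rewrite Rabs_right by lra.
eapply Rle_trans; [apply cosh_le_exp; lra | apply exp_le_exp; lra].
Qed.

Lemma bounded_near_0_sh : bounded_near_0 (sh beta).
Proof.
destruct bounded_near_0_ch as [M HM]. exists M. intros x Hx.
destruct (scaled_arg_bounds x Hx) as [H0 H1]. specialize (HM x Hx).
unfold sh, ch in *. assert (H := sinh_pos _ H0). assert (H' := sinh_le_cosh (2 * PI * x / beta)).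
rewrite Rabs_right in * by lra. lra.
Qed.

Lemma bounded_near_0_sh_div : bounded_near_0 (fun x => sh beta x * / x).
Proof.
exists (2 * PI / beta * exp (2 * PI / beta)). intros x Hx.
destruct (scaled_arg_bounds x Hx) as [H0 H1]. unfold sh.
assert (Hs := sinh_pos _ H0). assert (He := exp_le_exp _ _ H1).
assert (Hle := sinh_le_mul_exp (2 * PI * x / beta) ltac:(lra)).
rewrite Rabs_right by (apply Rle_ge, Rmult_le_pos; [lra | left; apply Rinv_0_lt_compat; lra]).
apply Rmult_le_reg_r with x; [lra|]. rewrite Rmult_assoc, Rinv_l, Rmult_1_r by lra.
replace (2 * PI * x / beta * exp (2 * PI * x / beta)) with
  (2 * PI / beta * exp (2 * PI * x / beta) * x) in Hle by (field; lra).
assert (0 < 2 * PI / beta) by lra.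
assert (2 * PI / beta * exp (2 * PI * x / beta) * x <= 2 * PI / beta * exp (2 * PI / beta) * x).
{ apply Rmult_le_compat_r; [lra|]. apply Rmult_le_compat_l; lra. }
lra.
Qed.

Lemma hyperbolic_bounds_large x : 3 * beta / (2 * PI) <= x ->
  0 < sh beta x /\ sh beta x <= ch beta x /\ ch beta x / 2 <= den beta tau x /\
  exp (2 * PI / beta * x) / 2 <= ch beta x /\ Rabs (sh beta x - ch beta x) <= 1.
Proof.
intros Hx. assert (HP := PI_RGT_0).
assert (Hy : 3 <= 2 * PI * x / beta).
{ apply Rmult_le_reg_r with (beta / (2 * PI)); [apply Rdiv_lt_0_compat; lra|].
  replace (2 * PI * x / beta * (beta / (2 * PI))) with x by (field; lra).
  replace (3 * (beta / (2 * PI))) with (3 * beta / (2 * PI)) by (field; lra). lra. }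
assert (Hc := COS_bound (2 * PI * tau / beta)).
assert (HC2 := cosh_ge_affine (2 * PI * x / beta) ltac:(lra)).
assert (Hm : 0 < exp (- (2 * PI * x / beta))) by apply exp_pos.
replace (2 * PI / beta * x) with (2 * PI * x / beta) by (field; lra).
unfold den, sh, ch, cs. repeat split.
- apply sinh_pos. lra.
- apply sinh_le_cosh.
- lra.
- unfold cosh. lra.
- unfold sinh, cosh. rewrite Rabs_left1; [|lra].
  assert (exp (- (2 * PI * x / beta)) <= 1) by (rewrite <- exp_0; apply exp_le_exp; lra). lra.
Qed.

Lemma bigO_inv_pow_inv_den n : bigO_inv_pow n (fun x => / den beta tau x).
Proof.
assert (HP := PI_RGT_0).
apply bigO_inv_pow_of_exp_decay with (2 * PI / beta) 4 (3 * beta / (2 * PI));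
  [apply Rdiv_lt_0_compat; lra|].
intros x Hx. destruct (hyperbolic_bounds_large x Hx) as (H1 & H2 & H3 & H4 & H5).
assert (0 < exp (2 * PI / beta * x)) by apply exp_pos.
rewrite Rabs_right by (apply Rle_ge, Rlt_le, Rinv_0_lt_compat; lra).
replace (4 * / exp (2 * PI / beta * x)) with (/ (exp (2 * PI / beta * x) / 4)) by (field; lra).
apply Rinv_le_contravar; lra.
Qed.

Lemma bigO_inv_pow_div_den (f : R -> R) :
  (forall x, 3 * beta / (2 * PI) <= x -> 0 <= f x <= ch beta x) ->
  bigO_inv_pow 0 (fun x => f x * / den beta tau x).
Proof.
intros Hf. apply bigO_inv_pow_of_bound with 2 (3 * beta / (2 * PI)). intros x Hx.
destruct (hyperbolic_bounds_large x Hx) as (H1 & H2 & H3 & H4 & H5). specialize (Hf x Hx).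
rewrite Rabs_right by (apply Rle_ge, Rmult_le_pos; [lra | left; apply Rinv_0_lt_compat; lra]).
apply Rmult_le_reg_r with (den beta tau x); [lra|].
rewrite Rmult_assoc, Rinv_l by lra. lra.
Qed.

Lemma bigO_inv_pow_sh_div_den : bigO_inv_pow 0 (fun x => sh beta x * / den beta tau x).
Proof.
apply bigO_inv_pow_div_den. intros x Hx. destruct (hyperbolic_bounds_large x Hx) as (H1 & H2 & _). lra.
Qed.

Lemma bigO_inv_pow_ch_div_den : bigO_inv_pow 0 (fun x => ch beta x * / den beta tau x).
Proof.
apply bigO_inv_pow_div_den. intros x Hx. destruct (hyperbolic_bounds_large x Hx) as (H1 & H2 & _). lra.
Qed.

Lemma bigO_inv_pow_sh_sub_ch : bigO_inv_pow 0 (fun x => sh beta x - ch beta x).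
Proof.
apply bigO_inv_pow_of_bound with 1 (3 * beta / (2 * PI)). intros x Hx.
apply (hyperbolic_bounds_large x Hx).
Qed.

Ltac close_field x :=
  let Hx' := fresh in assert (Hx' : 0 < x) by lra;
  let HD := fresh in assert (HD := den_pos beta Hbeta tau x Hx');
  let HP := fresh in assert (HP := Pi_ge_1 beta rho Hbeta tau x Hx');
  field; repeat split; lra.

Ltac bigO_auto := first
  [ assumption
  | apply bigO_inv_pow_inv_den | apply bigO_inv_pow_sh_div_den | apply bigO_inv_pow_ch_div_den
  | apply bigO_inv_pow_sh_sub_ch | apply bigO_inv_pow_inv_Pi | apply bigO_inv_pow_sin
  | apply bigO_inv_pow_cos | apply bigO_inv_pow_const | apply bigO_inv_pow_inv
  | apply (bigO_inv_pow_S 0), bigO_inv_pow_inv | apply (bigO_inv_pow_inv_pow 2)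
  | apply bigO_inv_pow_plus; bigO_auto | apply bigO_inv_pow_minus; bigO_auto
  | apply bigO_inv_pow_opp; bigO_auto | apply bigO_inv_pow_mult_id; bigO_auto
  | solve [apply bigO_inv_pow_mult_r; bigO_auto] | solve [apply bigO_inv_pow_mult_l; bigO_auto]
  | solve [apply (bigO_inv_pow_mult 1 1); bigO_auto]
  | solve [apply (bigO_inv_pow_mult 2 2); bigO_auto] ].

Lemma bigO_inv_pow_Pi_r : bigO_inv_pow 2 (Pi_r beta rho tau).
Proof.
apply bigO_inv_pow_ext with (fun x => PI * rho ^ 2 / beta *
  ((2 * PI / beta) * / x * (/ den beta tau x *
     (/ den beta tau x - cs beta tau * (ch beta x * / den beta tau x)))
   - / x ^ 2 * (sh beta x * / den beta tau x))).
- bigO_auto.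
- intros x Hx. unfold Pi_r. close_field x.
Qed.

Lemma bigO_inv_pow_Pi_t : bigO_inv_pow 4 (Pi_t beta rho tau).
Proof.
apply bigO_inv_pow_ext with (fun x => PI * rho ^ 2 / beta * cs' beta tau *
  ((sh beta x * / den beta tau x) * (/ den beta tau x * / x))).
- bigO_auto.
- intros x Hx. unfold Pi_t. close_field x.
Qed.

Lemma bigO_inv_pow_Pi_tr : bigO_inv_pow 4 (Pi_tr beta rho tau).
Proof.
apply bigO_inv_pow_ext with (fun x => PI * rho ^ 2 / beta * cs' beta tau *
  ((2 * PI / beta) * ((ch beta x * / den beta tau x) * (/ den beta tau x * / x))
   - (sh beta x * / den beta tau x) * (/ den beta tau x * / x ^ 2)
   - 2 * (2 * PI / beta) * ((sh beta x * / den beta tau x) * (sh beta x * / den beta tau x))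
       * (/ den beta tau x * / x))).
- bigO_auto.
- intros x Hx. unfold Pi_tr. close_field x.
Qed.

Lemma bigO_inv_pow_Pi_tt : bigO_inv_pow 4 (Pi_tt beta rho tau).
Proof.
apply bigO_inv_pow_ext with (fun x => PI * rho ^ 2 / beta * ((sh beta x * / den beta tau x) *
  (cs'' beta tau + 2 * cs' beta tau ^ 2 * / den beta tau x) * (/ den beta tau x * / x))).
- bigO_auto.
- intros x Hx. unfold Pi_tt. close_field x.
Qed.

Section Nondegenerate.

Hypothesis Hcs : cs beta tau < 1.

Let c := cos (2 * PI * (tau / beta)).
Let kg := - PI ^ 2 * (rho / beta) ^ 2 * sin (2 * PI * (tau / beta)).

Lemma c_lt_1 : c < 1.
Proof. unfold c, cs in *. replace (2 * PI * (tau / beta)) with (2 * PI * tau / beta) by (field; lra). auto. Qed.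

Lemma gb_eq r : 0 < r -> g r = kg * ghat_primitive c (rho / beta) (r / beta).
Proof. intros Hr. apply ghat_eq; [apply Rdiv_lt_0_compat; auto | apply c_lt_1]. Qed.

Lemma continuous_on_pos_gb : continuous_on_pos g.
Proof.
apply (continuous_on_pos_ext (fun r => kg * ghat_primitive c (rho / beta) (r / beta))).
- intros r Hr. symmetry. apply gb_eq; auto.
- intros x Hx. apply continuous_Rmult; [apply continuous_Rconst|].
  apply (continuous_Rcomp (fun r => r / beta)).
  + apply continuous_of_ex_derive. auto_derive. lra.
  + apply continuous_of_ex_derive. eexists. apply is_derive_ghat_primitive, c_lt_1.
Qed.

Lemma gb_increment r r' : beta <= r <= r' ->
  Rabs (g r' - g r) <= Rabs kg * (4 / PI) * beta / r.
Proof.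
intros Hr. rewrite !gb_eq by lra.
rewrite <- Rmult_minus_distr_l, Rabs_mult.
replace (Rabs kg * (4 / PI) * beta / r) with (Rabs kg * ((4 / PI) / (r / beta)))
  by (field; repeat split; try lra; apply PI_neq0).
apply Rmult_le_compat_l; [apply Rabs_pos|].
apply ghat_primitive_increment; [apply c_lt_1|]. split.
- apply Rmult_le_reg_r with beta; auto. unfold Rdiv. rewrite Rmult_assoc, Rinv_l; lra.
- unfold Rdiv. apply Rmult_le_compat_r; [left; apply Rinv_0_lt_compat|]; lra.
Qed.

Lemma gb_dist_lim (ginf : R) r : is_lim g p_infty ginf -> beta <= r ->
  Rabs (g r - ginf) <= Rabs kg * (4 / PI) * beta / r.
Proof.
intros Hl Hr. apply Rle_plus_epsilon. intros eps Heps.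
apply is_lim_spec in Hl. destruct (Hl (mkposreal eps Heps)) as [M HM].
set (r' := Rmax r (M + 1)).
assert (Hr' : r <= r') by apply Rmax_l.
assert (HM' : M < r') by (assert (M + 1 <= r') by apply Rmax_r; lra).
specialize (HM r' HM'). simpl in HM.
assert (HR := gb_increment r r' (conj Hr Hr')).
replace (g r - ginf) with (- (g r' - g r) + (g r' - ginf)) by ring.
eapply Rle_trans; [apply Rabs_triang|]. rewrite Rabs_Ropp. lra.
Qed.

Lemma bigO_inv_pow_sin_2gb (ginf : R) : is_lim g p_infty ginf ->
  bigO_inv_pow 1 (fun x => sin (2 * ginf) - sin (2 * g x)).
Proof.
intros Hl. exists (2 * (Rabs kg * (4 / PI) * beta)), (Rmax beta 1). split; [apply Rmax_r|].
intros x Hx. assert (Hbx : beta <= x) by (eapply Rle_trans; [apply Rmax_l | eauto]).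
assert (H1x : 1 <= x) by (eapply Rle_trans; [apply Rmax_r | eauto]).
eapply Rle_trans; [apply abs_sin_sub_le|].
replace (2 * ginf - 2 * g x) with (2 * (ginf - g x)) by ring.
rewrite Rabs_mult, (Rabs_right 2), Rabs_minus_sym by lra.
replace (2 * (Rabs kg * (4 / PI) * beta) / x ^ 1) with (2 * (Rabs kg * (4 / PI) * beta / x))
  by (rewrite pow_1; unfold Rdiv; ring).
apply Rmult_le_compat_l; [lra|]. apply gb_dist_lim; auto.
Qed.

Lemma bounded_near_0_inv_den : bounded_near_0 (fun x => / den beta tau x).
Proof.
exists (/ (1 - cs beta tau)). intros x Hx.
assert (HD : 1 - cs beta tau <= den beta tau x).
{ unfold den, ch. assert (H := cosh_ge_1 (2 * PI * x / beta)). lra. }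
rewrite Rabs_right by (apply Rle_ge, Rlt_le, Rinv_0_lt_compat; lra).
apply Rinv_le_contravar; lra.
Qed.

Lemma continuous_on_pos_sin_2gb : continuous_on_pos (fun x => sin (2 * g x)).
Proof.
intros x Hx. apply (continuous_Rcomp (fun x => 2 * g x) sin).
- apply continuous_Rmult; [apply continuous_Rconst | apply continuous_on_pos_gb; auto].
- apply continuous_of_ex_derive. auto_derive. auto.
Qed.

Lemma continuous_on_pos_cos_2gb : continuous_on_pos (fun x => cos (2 * g x)).
Proof.
intros x Hx. apply (continuous_Rcomp (fun x => 2 * g x) cos).
- apply continuous_Rmult; [apply continuous_Rconst | apply continuous_on_pos_gb; auto].
- apply continuous_of_ex_derive. auto_derive. auto.
Qed.

Ltac bounded_near_0_auto := repeat first
  [ apply bounded_near_0_sh_div | apply bounded_near_0_sh | apply bounded_near_0_ch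
  | apply bounded_near_0_inv_den | apply bounded_near_0_inv_Pi | apply bounded_near_0_id
  | apply bounded_near_0_sin | apply bounded_near_0_cos | apply bounded_near_0_const
  | apply bounded_near_0_plus | apply bounded_near_0_minus | apply bounded_near_0_opp
  | apply bounded_near_0_mult | apply bounded_near_0_pow ].

Ltac continuity_r2T :=
  intros ? ?; unfold T1, T2, T3, T4, T5, T6, Rdiv;
  repeat match goal with
  | |- continuous (fun r => sin (2 * gb _ _ _ r)) _ => apply continuous_on_pos_sin_2gb
  | |- continuous (fun r => cos (2 * gb _ _ _ r)) _ => apply continuous_on_pos_cos_2gb
  | |- continuous (fun r => Pi _ _ _ r) _ => apply continuous_on_pos_Pi
  | |- continuous (Pi _ _ _) _ => apply continuous_on_pos_Pi
  | |- continuous (fun r => dtPi _ _ _ r) _ => apply continuous_on_pos_dtPi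
  | |- continuous (dtPi _ _ _) _ => apply continuous_on_pos_dtPi
  | |- continuous (fun r => drPi _ _ _ r) _ => apply continuous_on_pos_drPi
  | |- continuous (drPi _ _ _) _ => apply continuous_on_pos_drPi
  | |- continuous (fun r => dtrPi _ _ _ r) _ => apply continuous_on_pos_dtrPi
  | |- continuous (dtrPi _ _ _) _ => apply continuous_on_pos_dtrPi
  | |- continuous (fun r => dttPi _ _ _ r) _ => apply continuous_on_pos_dttPi
  | |- continuous (dttPi _ _ _) _ => apply continuous_on_pos_dttPi
  | |- continuous (fun r => drrPi _ _ _ r) _ => apply continuous_on_pos_drrPi
  | |- continuous (drrPi _ _ _) _ => apply continuous_on_pos_drrPi
  | |- continuous (fun r => r) _ => apply continuous_Rid
  | |- continuous (fun r => _ * _) _ => apply continuous_Rmult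
  | |- continuous (fun r => - _) _ => apply continuous_Ropp
  | |- continuous (fun r => _ ^ _) _ => apply continuous_Rpow
  | |- continuous (fun r => / _) _ => apply continuous_Rinv
  | |- continuous (fun r => _) _ => apply continuous_Rconst
  | |- _ ^ _ <> 0 => apply pow_nonzero
  | |- Pi _ _ _ _ <> 0 => apply Rgt_not_eq, Pi_pos
  | |- 0 < _ => assumption
  end.

Lemma admissible_r2T1 : admissible (fun r => r ^ 2 * T1 beta rho tau r).
Proof.
repeat split.
- continuity_r2T.
- apply bounded_near_0_ext with (fun x => 4 * cos (2 * g x) *
    (PI * rho ^ 2 / beta * (sh beta x * cs' beta tau * (/ den beta tau x * / den beta tau x))) *
    (PI * rho ^ 2 / beta * ((2 * PI / beta) * (1 - ch beta x * cs beta tau)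
                              * (/ den beta tau x * / den beta tau x)
                            - (sh beta x * / x) * / den beta tau x)) * (/ Pi beta rho tau x) ^ 2).
  + bounded_near_0_auto.
  + intros x Hx. unfold T1. rewrite dtPi_eq, drPi_eq by auto. unfold Pi_t, Pi_r. close_field x.
- apply bigO_inv_pow_mult_sq.
  apply bigO_inv_pow_ext with (fun x => 4 * cos (2 * g x) *
    (Pi_t beta rho tau x * Pi_r beta rho tau x) * (/ Pi beta rho tau x * / Pi beta rho tau x)).
  + assert (H1 := bigO_inv_pow_Pi_t).
    assert (H2 := bigO_inv_pow_S _ _ (bigO_inv_pow_S _ _ bigO_inv_pow_Pi_r)).
    bigO_auto.
  + intros x Hx. unfold T1. rewrite dtPi_eq, drPi_eq by lra. close_field x.
Qed.

Lemma admissible_r2T2 : admissible (fun r => r ^ 2 * T2 beta rho tau r).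
Proof.
repeat split.
- continuity_r2T.
- apply bounded_near_0_ext with (fun x => - 2 * cos (2 * g x) *
    (PI * rho ^ 2 / beta * cs' beta tau *
      ((2 * PI / beta) * ch beta x * x * (/ den beta tau x * / den beta tau x)
       - sh beta x * (/ den beta tau x * / den beta tau x)
       - 2 * (2 * PI / beta) * sh beta x ^ 2 * x
           * (/ den beta tau x * / den beta tau x * / den beta tau x)))
    * / Pi beta rho tau x).
  + bounded_near_0_auto.
  + intros x Hx. unfold T2. rewrite dtrPi_eq by auto. unfold Pi_tr. close_field x.
- apply bigO_inv_pow_mult_sq.
  apply bigO_inv_pow_ext with (fun x => - 2 * cos (2 * g x) * Pi_tr beta rho tau x
    * / Pi beta rho tau x).
  + assert (H := bigO_inv_pow_Pi_tr). bigO_auto.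
  + intros x Hx. unfold T2. rewrite dtrPi_eq by lra. close_field x.
Qed.

Lemma admissible_r2T3 : admissible (fun r => r ^ 2 * T3 beta rho tau r).
Proof.
repeat split.
- continuity_r2T.
- apply bounded_near_0_ext with (fun x => 2 * sin (2 * g x) *
    (PI * rho ^ 2 / beta * ((2 * PI / beta) * (1 - ch beta x * cs beta tau)
                              * (/ den beta tau x * / den beta tau x)
                            - (sh beta x * / x) * / den beta tau x)) ^ 2
    * (/ Pi beta rho tau x) ^ 2).
  + bounded_near_0_auto.
  + intros x Hx. unfold T3. rewrite drPi_eq by auto. unfold Pi_r. close_field x.
- apply bigO_inv_pow_mult_sq.
  apply bigO_inv_pow_ext with (fun x => 2 * sin (2 * g x) *
    (Pi_r beta rho tau x * Pi_r beta rho tau x) * (/ Pi beta rho tau x * / Pi beta rho tau x)).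
  + assert (H := bigO_inv_pow_Pi_r). bigO_auto.
  + intros x Hx. unfold T3. rewrite drPi_eq by lra. close_field x.
Qed.

Lemma admissible_r2T4 : admissible (fun r => r ^ 2 * T4 beta rho tau r).
Proof.
repeat split.
- continuity_r2T.
- apply bounded_near_0_ext with (fun x => - 2 * sin (2 * g x) *
    (PI * rho ^ 2 / beta * (sh beta x * cs' beta tau * (/ den beta tau x * / den beta tau x))) ^ 2
    * (/ Pi beta rho tau x) ^ 2).
  + bounded_near_0_auto.
  + intros x Hx. unfold T4. rewrite dtPi_eq by auto. unfold Pi_t. close_field x.
- apply bigO_inv_pow_mult_sq.
  apply bigO_inv_pow_ext with (fun x => - 2 * sin (2 * g x) *
    (Pi_t beta rho tau x * Pi_t beta rho tau x) * (/ Pi beta rho tau x * / Pi beta rho tau x)).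
  + assert (H1 := bigO_inv_pow_Pi_t).
    assert (H2 := bigO_inv_pow_S _ _ (bigO_inv_pow_S _ _
                    (bigO_inv_pow_S _ _ (bigO_inv_pow_S _ _ bigO_inv_pow_Pi_t)))).
    bigO_auto.
  + intros x Hx. unfold T4. rewrite dtPi_eq by lra. close_field x.
Qed.

Lemma admissible_r2T5 : admissible (fun r => r ^ 2 * T5 beta rho tau r).
Proof.
repeat split.
- continuity_r2T.
- apply bounded_near_0_ext with (fun x => sin (2 * g x) *
    (PI * rho ^ 2 / beta * (sh beta x * x *
       (cs'' beta tau * (/ den beta tau x * / den beta tau x)
        + 2 * cs' beta tau ^ 2 * (/ den beta tau x * / den beta tau x * / den beta tau x))))
    * / Pi beta rho tau x).
  + bounded_near_0_auto.
  + intros x Hx. unfold T5. rewrite dttPi_eq by auto. unfold Pi_tt. close_field x.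
- apply bigO_inv_pow_mult_sq.
  apply bigO_inv_pow_ext with (fun x => sin (2 * g x) * Pi_tt beta rho tau x
    * / Pi beta rho tau x).
  + assert (H := bigO_inv_pow_Pi_tt). bigO_auto.
  + intros x Hx. unfold T5. rewrite dttPi_eq by lra. close_field x.
Qed.

Lemma r2T6_bounds (ginf : R) : is_lim g p_infty ginf ->
  continuous_on_pos (fun r => r ^ 2 * T6 beta rho tau r) /\
  bounded_near_0 (fun r => r ^ 2 * T6 beta rho tau r) /\
  bigO_inv_pow 2 (fun r => r ^ 2 * T6 beta rho tau r + 2 * PI * rho ^ 2 / beta * sin (2 * ginf) * / r).
Proof.
intros Hl. repeat split.
- continuity_r2T.
- apply bounded_near_0_ext with (fun x => - sin (2 * g x) *
    (PI * rho ^ 2 / beta * (2 * (sh beta x * / x) * / den beta tau x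
       + 2 * (2 * PI / beta) * (ch beta x * cs beta tau - 1) * (/ den beta tau x * / den beta tau x)
       + (2 * PI / beta) ^ 2 * sh beta x * x * (cs beta tau ^ 2 - 2 + ch beta x * cs beta tau)
           * (/ den beta tau x * / den beta tau x * / den beta tau x)))
    * / Pi beta rho tau x).
  + bounded_near_0_auto.
  + intros x Hx. unfold T6. rewrite drrPi_eq by auto. unfold Pi_rr. close_field x.
- assert (H := bigO_inv_pow_sin_2gb ginf Hl).
  apply bigO_inv_pow_ext with (fun x =>
    2 * (PI * rho ^ 2 / beta) * (/ x * (sin (2 * ginf) - sin (2 * g x)))
    - sin (2 * g x) *
      (2 * (PI * rho ^ 2 / beta) * (/ x * ((sh beta x - ch beta x + cs beta tau) * / den beta tau x))
       + PI * rho ^ 2 / beta *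
         (2 * (2 * PI / beta) * (/ den beta tau x
             * (cs beta tau * (ch beta x * / den beta tau x) - / den beta tau x))
          + (2 * PI / beta) ^ 2 * (cs beta tau ^ 2 - 2)
             * (x * ((sh beta x * / den beta tau x) * (/ den beta tau x * / den beta tau x)))
          + (2 * PI / beta) ^ 2 * cs beta tau
             * (x * ((sh beta x * / den beta tau x) * (ch beta x * / den beta tau x)
                     * / den beta tau x)))
       - 2 * (PI * rho ^ 2 / beta) ^ 2 * (/ x ^ 2 * (sh beta x * / den beta tau x)))
      * / Pi beta rho tau x).
  + bigO_auto.
  + intros x Hx. assert (Hx' : 0 < x) by lra. unfold T6. rewrite drrPi_eq by auto. unfold Pi_rr.
    assert (HD := den_pos beta Hbeta tau x Hx'). assert (HP := Pi_ge_1 beta rho Hbeta tau x Hx').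
    rewrite Pi_eq in * by auto. unfold den in *. field. repeat split; try lra.
    replace (beta * (x * (ch beta x - cs beta tau)) + PI * rho ^ 2 * sh beta x) with
      ((beta * x * (ch beta x - cs beta tau))
       * (1 + PI * rho ^ 2 / beta * (/ x * (sh beta x * / (ch beta x - cs beta tau)))))
      by (field; repeat split; lra).
    apply Rgt_not_eq, Rmult_lt_0_compat; [apply Rmult_lt_0_compat; nra | lra].
Qed.
End Nondegenerate.

Definition radial_bounds (ginf : R) :=
  admissible (fun r => r ^ 2 * T1 beta rho tau r) /\
  admissible (fun r => r ^ 2 * T2 beta rho tau r) /\
  admissible (fun r => r ^ 2 * T3 beta rho tau r) /\
  admissible (fun r => r ^ 2 * T4 beta rho tau r) /\
  admissible (fun r => r ^ 2 * T5 beta rho tau r) /\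
  continuous_on_pos (fun r => r ^ 2 * T6 beta rho tau r) /\
  bounded_near_0 (fun r => r ^ 2 * T6 beta rho tau r) /\
  bigO_inv_pow 2 (fun r => r ^ 2 * T6 beta rho tau r + 2 * PI * rho ^ 2 / beta * sin (2 * ginf) * / r).

Lemma radial_bounds_nondegenerate (ginf : R) : cs beta tau < 1 ->
  is_lim g p_infty ginf -> radial_bounds ginf.
Proof.
intros Hcs Hl. destruct (r2T6_bounds Hcs ginf Hl) as (C6 & B6 & O6).
repeat (split; [auto using admissible_r2T1, admissible_r2T2, admissible_r2T3,
                            admissible_r2T4, admissible_r2T5 |]).
auto.
Qed.

Section Degenerate.

Hypothesis Hsin : sin (2 * PI * tau / beta) = 0.

Lemma gb_degenerate r : g r = 0.
Proof.
unfold gb, ghat. replace (2 * PI * (tau / beta)) with (2 * PI * tau / beta) by (field; lra).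
rewrite Hsin. ring.
Qed.

Lemma derivatives_degenerate x : 0 < x ->
  dtPi beta rho tau x = 0 /\ dtrPi beta rho tau x = 0 /\ sin (2 * g x) = 0.
Proof.
intros Hx. assert (Hcs' : cs' beta tau = 0) by (unfold cs'; rewrite Hsin; ring).
rewrite dtPi_eq, dtrPi_eq, gb_degenerate, Rmult_0_r, sin_0 by auto.
unfold Pi_t, Pi_tr. rewrite Hcs'. repeat split; unfold Rdiv; ring.
Qed.

Lemma radial_bounds_degenerate : radial_bounds 0.
Proof.
assert (V : forall T : R -> R -> R -> R -> R, (forall x, 0 < x -> T beta rho tau x = 0) ->
          admissible (fun r => r ^ 2 * T beta rho tau r)).
{ intros T HT. apply admissible_of_vanishing. intros x Hx. rewrite HT by auto. ring. }
assert (A6 : admissible (fun r => r ^ 2 * T6 beta rho tau r)).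
{ apply V. intros x Hx. destruct (derivatives_degenerate x Hx) as (_ & _ & Hs).
  unfold T6. rewrite Hs. unfold Rdiv. ring. }
destruct A6 as (C6 & B6 & O6).
refine (conj (V T1 _) (conj (V T2 _) (conj (V T3 _) (conj (V T4 _) (conj (V T5 _)
         (conj C6 (conj B6 _))))))).
6: { apply bigO_inv_pow_ext with (1 := O6). intros x _. rewrite Rmult_0_r, sin_0. ring. }
all: intros x Hx; destruct (derivatives_degenerate x Hx) as (Ht & Htr & Hs);
  unfold T1, T2, T3, T4, T5; rewrite ?Ht, ?Htr, ?Hs; unfold Rdiv; ring.
Qed.

End Degenerate.

Lemma radial_bounds_all (ginf : R) : is_lim g p_infty ginf -> radial_bounds ginf.
Proof.
intros Hl. destruct (Req_dec (sin (2 * PI * tau / beta)) 0) as [Hsin | Hsin].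
- replace ginf with 0; [apply radial_bounds_degenerate; auto|].
  apply is_lim_unique in Hl.
  rewrite (Lim_ext (fun _ => 0) g), Lim_const in Hl by (intros; symmetry; apply gb_degenerate; auto).
  injection Hl. auto.
- apply radial_bounds_nondegenerate; auto.
  unfold cs. assert (H := sin2_cos2 (2 * PI * tau / beta)).
  assert (H2 := COS_bound (2 * PI * tau / beta)).
  assert (0 < (sin (2 * PI * tau / beta))²) by (apply Rsqr_pos_lt; auto).
  unfold Rsqr in *. nra.
Qed.

End Radial.

Theorem proposition5 (beta rho tau : R) (Hbeta : 0 < beta) (Hrho : 0 < rho)
  (ginf : R)
  (Hginf : is_lim (fun r => gb beta rho tau r) p_infty ginf) :
  ex_RInt_gen (fun r => r ^ 2 * T1 beta rho tau r) (at_right 0) (Rbar_locally p_infty) /\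
  ex_RInt_gen (fun r => r ^ 2 * T2 beta rho tau r) (at_right 0) (Rbar_locally p_infty) /\
  ex_RInt_gen (fun r => r ^ 2 * T3 beta rho tau r) (at_right 0) (Rbar_locally p_infty) /\
  ex_RInt_gen (fun r => r ^ 2 * T4 beta rho tau r) (at_right 0) (Rbar_locally p_infty) /\
  ex_RInt_gen (fun r => r ^ 2 * T5 beta rho tau r) (at_right 0) (Rbar_locally p_infty) /\
  ex_RInt_gen (fun r => r ^ 2 * T6 beta rho tau r) (at_right 0) (at_point beta) /\
  ex_RInt_gen
    (fun r => r ^ 2 * T6 beta rho tau r + 2 * PI * rho ^ 2 / beta * sin (2 * ginf) * / r)
    (at_point beta) (Rbar_locally p_infty) /\
  (exists R0 C : R, forall Rr : R, R0 <= Rr ->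
     exists v : R,
       is_RInt_gen (fun r => r ^ 2 * T6 beta rho tau r) (at_right 0) (at_point Rr) v /\
       Rabs (v - (- (2 * PI * rho ^ 2 / beta) * sin (2 * ginf) * ln Rr)) <= C).
Proof.
destruct (radial_bounds_all beta rho tau Hbeta ginf Hginf)
  as (A1 & A2 & A3 & A4 & A5 & C6 & B6 & O6).
split; [exact (ex_RInt_gen_0_p_infty _ A1)|].
split; [exact (ex_RInt_gen_0_p_infty _ A2)|].
split; [exact (ex_RInt_gen_0_p_infty _ A3)|].
split; [exact (ex_RInt_gen_0_p_infty _ A4)|].
split; [exact (ex_RInt_gen_0_p_infty _ A5)|].
split; [apply ex_RInt_gen_at_right_0; auto|].
split.
- apply ex_RInt_gen_p_infty; auto.
  intros x Hx. apply continuous_Rplus; [apply C6; auto|].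
  apply continuous_of_ex_derive. auto_derive. lra.
- destruct (RInt_gen_log_asymptotics _ _ C6 B6 O6) as (R0 & C & H).
  exists R0, C. intros Rr HR. destruct (H Rr HR) as (v & Hv & Hbound).
  exists v. split; auto.
  replace (- (2 * PI * rho ^ 2 / beta) * sin (2 * ginf) * ln Rr)
    with (- (2 * PI * rho ^ 2 / beta * sin (2 * ginf)) * ln Rr) by ring.
  auto.
Qed.
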